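(* Let $I$ be a countable index set with a nested sequence of finite subsets $I_1\subset I_2\subset\cdots$ with $\bigcup_n I_n=I$. Let $\mathcal{F}=\{f_i\}_{i\in I}\in\mathcal{F}[I]$ and let $\pi:I\to I$ be a bijection (not necessarily finite) such that $\lim_{n\to\infty}\frac{|I_n\cap\pi(I_n)|}{|I_n|}=1$. If $\mathcal{G}=\{g_i=f_{\pi(i)}:i\in I\}$, then $\mathcal{G}\approx\mathcal{F}$.
   Context: $\mathcal{F}[I]$ denotes the set of all families $\{f_i\}_{i\in I}$ in a separable Hilbert space which are frames for their closed linear span. The canonical dual is $\tilde f_i=S^{-1}f_i$ where $S$ is the frame operator on the closed span. $b_n(\mathcal{F})=\sum_{i\in I_n}\langle f_i,\tilde f_i\rangle$ and $b(\mathcal{F})=(b_n(\mathcal{F}))_n$. For sequences $\mathbf{x},\mathbf{y}$, write $\mathbf{x}\approx\mathbf{y}$ if $\lim_{n\to\infty}(x_n-y_n)/|I_n|=0$; for frames, $\mathcal{F}\approx\mathcal{G}$ means $b(\mathcal{F})\approx b(\mathcal{G})$. *)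

From HB Require Import structures.
From mathcomp Require Import all_boot all_order all_algebra.
From mathcomp Require Import finmap.
From mathcomp Require Import reals.
From mathcomp Require Import complex.
From Stdlib Require Import ClassicalEpsilon.
Set Implicit Arguments. Unset Strict Implicit. Unset Printing Implicit Defensive.
Import Order.TTheory GRing.Theory Num.Theory.
Local Open Scope ring_scope.
Section Defs.
Variable R : realType.
Local Notation C := R[i].

Definition cabs2 (z : C) : R := complex.Re z ^+ 2 + complex.Im z ^+ 2.
Definition cabs (z : C) : R := Num.sqrt (cabs2 z).

(* unconditional (net over finite subsets) summation in a space with norm nrm *)
Definition has_sum (V : zmodType) (nrm : V -> R) (I : eqType)
    (a : I -> V) (l : V) : Prop :=
  forall eps : R, 0 < eps -> exists F0 : seq I, forall F : seq I,
    uniq F -> {subset F0 <= F} -> nrm (\sum_(i <- F) a i - l) < eps.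

Variable H : lmodType C.
Variable ip : H -> H -> C.   (* inner product, linear in the first argument *)

Definition hnorm (x : H) : R := Num.sqrt (complex.Re (ip x x)).

Definition is_inner_product : Prop :=
  (forall (a : C) (x y z : H), ip (a *: x + y) z = a * ip x z + ip y z) /\
  (forall x y : H, ip y x = (ip x y)^*) /\
  (forall x : H, 0 <= ip x x) /\
  (forall x : H, ip x x = 0 -> x = 0).

Definition is_complete : Prop :=
  forall u : nat -> H,
    (forall eps : R, 0 < eps -> exists N, forall m n, (N <= m)%N -> (N <= n)%N ->
        hnorm (u m - u n) < eps) ->
    exists l : H, forall eps : R, 0 < eps -> exists N, forall n, (N <= n)%N ->
        hnorm (u n - l) < eps.

Definition is_separable : Prop :=
  exists d : nat -> H, forall (x : H) (eps : R), 0 < eps ->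
    exists k, hnorm (x - d k) < eps.

Definition is_sep_hilbert : Prop :=
  [/\ is_inner_product, is_complete & is_separable].

Variable I : countType.

Definition clspan (f : I -> H) (x : H) : Prop :=
  forall eps : R, 0 < eps -> exists (s : seq I) (c : I -> C),
    hnorm (x - \sum_(i <- s) c i *: f i) < eps.

Definition frame_for_span (f : I -> H) : Prop :=
  exists A B : R, [/\ 0 < A, 0 < B & forall x, clspan f x ->
    exists s : R, [/\ has_sum Num.norm (fun i => cabs2 (ip x (f i))) s,
                     A * hnorm x ^+ 2 <= s & s <= B * hnorm x ^+ 2]].

(* h = S^{-1} (f i), S the frame operator S x = sum_j <x, f_j> f_j on the
   closed span:  h lies in the closed span and S h = f i *)
Definition is_canon_dual (f : I -> H) (i : I) (h : H) : Prop :=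
  clspan f h /\ has_sum hnorm (fun j => ip h (f j) *: f j) (f i).

Definition canon_dual (f : I -> H) (i : I) : H :=
  epsilon (inhabits 0) (is_canon_dual f i).

Definition bseq (Is : nat -> {fset I}) (f : I -> H) (n : nat) : C :=
  \sum_(i <- Is n) ip (f i) (canon_dual f i).

End Defs.

Local Open Scope fset_scope.

Definition approx (R : realType) (I : countType) (Is : nat -> {fset I})
    (x y : nat -> R[i]) : Prop :=
  forall eps : R, 0 < eps -> exists N, forall n, (N <= n)%N ->
    cabs ((x n - y n) / (#|` Is n|)%:R) < eps.

Definition frame_approx (R : realType) (H : lmodType R[i]) (ip : H -> H -> R[i])
    (I : countType) (Is : nat -> {fset I}) (f g : I -> H) : Prop :=
  approx Is (bseq ip Is f) (bseq ip Is g).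

Definition overlap_to_one (R : realType) (I : countType)
    (Is : nat -> {fset I}) (pi : I -> I) : Prop :=
  forall eps : R, 0 < eps -> exists N, forall n, (N <= n)%N ->
    `| (#|` Is n `&` [fset pi x | x in Is n]|)%:R / (#|` Is n|)%:R - 1 | < eps.

From Pilot Require Import Defs.
From HB Require Import structures.
From mathcomp Require Import all_boot all_order all_algebra.
From mathcomp Require Import finmap reals complex.
From mathcomp Require Import ring lra.
From Stdlib Require Import ClassicalEpsilon FunctionalExtensionality PropExtensionality.
Set Implicit Arguments. Unset Strict Implicit. Unset Printing Implicit Defensive.
Import Order.TTheory GRing.Theory Num.Theory.
Local Open Scope complex_scope.
Local Open Scope ring_scope.

(* Write a_j := <f_j, ~f_j>.  The canonical dual of the reindexed family
   (f_(pi i))_i at i is ~f_(pi i), so b_n(G) - b_n(F) is the sum of a over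
   pi(I_n) minus its sum over I_n.  The terms indexed by I_n ∩ pi(I_n) cancel,
   at most 2 (|I_n| - |I_n ∩ pi(I_n)|) terms remain, and the a_j are uniformly
   bounded: testing the frame identity S ~f_j = f_j against ~f_j gives
   a_j = sum_k |<~f_j, f_k>|^2 >= |<~f_j, f_j>|^2 = a_j^2, so 0 <= a_j <= 1.
   Dividing by |I_n| leaves a quantity tending to 0. *)

Section ComplexModulus.
Variable R : realType.
Local Notation C := R[i].

Lemma normcE (z : C) : `|z| = (cabs z)%:C.
Proof. by rewrite normc_def. Qed.

Lemma cabs_ge0 (z : C) : 0 <= cabs z.
Proof. exact: sqrtr_ge0. Qed.

Lemma cabsD (x y : C) : cabs (x + y) <= cabs x + cabs y.
Proof. by rewrite -lecR rmorphD /= -!normcE ler_normD. Qed.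

Lemma cabsN (x : C) : cabs (- x) = cabs x.
Proof. by apply: complexI; rewrite -!normcE normrN. Qed.

Lemma cabsR (x : R) : cabs x%:C = `|x|.
Proof. by rewrite /cabs /cabs2 /= expr0n /= addr0 sqrtr_sqr. Qed.

Lemma cabs_divn (z : C) (n : nat) : cabs (z / n%:R) = cabs z / n%:R.
Proof.
apply: complexI; rewrite rmorphM fmorphV /= -!normcE normrM normfV.
by rewrite normr_nat rmorph_nat.
Qed.

Lemma cabs2_ge0 (z : C) : 0 <= cabs2 z.
Proof. by rewrite addr_ge0 ?sqr_ge0. Qed.

Lemma cabs2E (z : C) : (cabs2 z)%:C = z * z^*.
Proof. by rewrite -normCK normcE -rmorphXn /= sqr_sqrtr ?cabs2_ge0. Qed.

Lemma sqr_cabs (z : C) : cabs z ^+ 2 = cabs2 z.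
Proof. by rewrite sqr_sqrtr ?cabs2_ge0. Qed.

Lemma cabs_lt_eq0 (z : C) : (forall e : R, 0 < e -> cabs z < e) -> z = 0.
Proof.
move=> small; suff cabs0 : cabs z = 0 by apply/eqP; rewrite -normr_eq0 normcE cabs0.
apply/eqP; rewrite eq_le cabs_ge0 andbT.
by apply/ler_addgt0Pr => e /small /ltW; rewrite add0r.
Qed.

End ComplexModulus.

Section UnconditionalSums.
Variable R : realType.
Local Notation C := R[i].
Variable I : eqType.

Lemma has_sum_ge_term (b : I -> R) s j :
  (forall k, 0 <= b k) -> has_sum Num.norm b s -> b j <= s.
Proof.
move=> b_ge0 bs; rewrite leNgt; apply/negP => s_lt.
have gap : 0 < b j - s by rewrite subr_gt0.
have [F0 F0s] := bs _ gap.
set F := undup (j :: F0).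
have sF0 : {subset F0 <= F} by move=> k k0; rewrite mem_undup inE k0 orbT.
have bj_le : b j <= \sum_(k <- F) b k.
  by rewrite (bigD1_seq j) ?undup_uniq ?mem_undup ?mem_head //= lerDl sumr_ge0.
have := le_lt_trans (ler_norm _) (F0s F (undup_uniq _) sF0).
by rewrite ltrBlDr subrK ltNge bj_le.
Qed.

Lemma has_sum_unique (a : I -> C) l1 l2 :
  has_sum (@cabs R) a l1 -> has_sum (@cabs R) a l2 -> l1 = l2.
Proof.
move=> al1 al2; apply/eqP; rewrite -subr_eq0; apply/eqP/cabs_lt_eq0 => e e_gt0.
have e2_gt0 : 0 < e / 2 by rewrite divr_gt0.
have [F1 F1l] := al1 _ e2_gt0.
have [F2 F2l] := al2 _ e2_gt0.
set F := undup (F1 ++ F2); set S := \sum_(i <- F) a i.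
have [sF1 sF2] : {subset F1 <= F} /\ {subset F2 <= F}.
  by split=> k k_in; rewrite mem_undup mem_cat k_in ?orbT.
have -> : l1 - l2 = (S - l2) - (S - l1) by ring.
apply: le_lt_trans (cabsD _ _) _; rewrite cabsN [e]splitr.
by rewrite ltrD ?F1l ?F2l ?undup_uniq.
Qed.

Lemma has_sum_realC (b : I -> R) s :
  has_sum Num.norm b s -> has_sum (@cabs R) (fun i => (b i)%:C) s%:C.
Proof.
move=> bs e /bs[F0 F0s]; exists F0 => F uF sF.
by rewrite -rmorph_sum -rmorphB cabsR F0s.
Qed.

End UnconditionalSums.

Section InnerProduct.
Variable R : realType.
Local Notation C := R[i].
Variable H : lmodType C.
Variable ip : H -> H -> C.
Hypothesis ip_inner : is_inner_product ip.

Lemma ipDZl a x y z : ip (a *: x + y) z = a * ip x z + ip y z.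
Proof. by case: ip_inner. Qed.

Lemma ipC x y : ip y x = (ip x y)^*.
Proof. by case: ip_inner => _ []. Qed.

Lemma ip_ge0 x : 0 <= ip x x.
Proof. by case: ip_inner => _ [_ []]. Qed.

Lemma ip_eq0 x : ip x x = 0 -> x = 0.
Proof. by case: ip_inner => _ [_ [_]]; apply. Qed.

Lemma ip0l z : ip 0 z = 0.
Proof.
have := ipDZl 1 0 0 z; rewrite scaler0 addr0 mul1r => h.
by apply: (addrI (ip 0 z)); rewrite addr0 -h.
Qed.

Lemma ipDl x y z : ip (x + y) z = ip x z + ip y z.
Proof. by rewrite -[x]scale1r ipDZl mul1r scale1r. Qed.

Lemma ipZl a x z : ip (a *: x) z = a * ip x z.
Proof. by rewrite -[a *: x]addr0 ipDZl ip0l addr0. Qed.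

Lemma ipBl x y z : ip (x - y) z = ip x z - ip y z.
Proof. by rewrite ipDl -scaleN1r ipZl mulN1r. Qed.

Lemma ip_suml (T : Type) (r : seq T) (v : T -> H) z :
  ip (\sum_(i <- r) v i) z = \sum_(i <- r) ip (v i) z.
Proof. exact: (big_morph (ip^~ z) (fun x y => ipDl x y z) (ip0l z)). Qed.

Lemma ip0r z : ip z 0 = 0.
Proof. by rewrite ipC ip0l conjC0. Qed.

Lemma ipDr x y z : ip z (x + y) = ip z x + ip z y.
Proof. by rewrite ipC ipDl rmorphD /= -!ipC. Qed.

Lemma ipZr a x z : ip z (a *: x) = a^* * ip z x.
Proof. by rewrite ipC ipZl rmorphM /= -ipC. Qed.

Lemma hnorm_ge0 x : 0 <= hnorm ip x.
Proof. exact: sqrtr_ge0. Qed.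

Lemma ip_selfE x : ip x x = (hnorm ip x ^+ 2)%:C.
Proof.
have := ip_ge0 x; rewrite /hnorm; case: (ip x x) => a b.
by rewrite lecE /= => /andP[/eqP -> a0]; rewrite sqr_sqrtr.
Qed.

Lemma hnorm0 : hnorm ip 0 = 0.
Proof. by rewrite /hnorm ip0l sqrtr0. Qed.

(* Expand [0 <= <x + z y, x + z y>] at [z = - <x, y> / <y, y>]. *)
Lemma cauchy_schwarz x y : cabs (ip x y) <= hnorm ip x * hnorm ip y.
Proof.
have [->|y0] := eqVneq y 0; first by rewrite ip0r hnorm0 mulr0 cabsR normr0.
have ny_gt0 : 0 < hnorm ip y.
  rewrite lt_def hnorm_ge0 andbT; apply: contra_neq y0 => ny0.
  by apply: ip_eq0; rewrite ip_selfE ny0 expr0n.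
have ny_neq0 : (hnorm ip y)%:C != 0 :> C.
  by rewrite -(rmorph0 (real_complex R)) (inj_eq (@complexI _)) gt_eqF.
set c := ip x y; set p := (hnorm ip x ^+ 2)%:C; set q := (hnorm ip y ^+ 2)%:C.
have qc : q^* = q by rewrite /q -ip_selfE -ipC.
set z := - (c / q).
have expand : ip (x + z *: y) (x + z *: y) = p - c * c^* / q.
  rewrite ipDl ipZl !ipDr !ipZr (ipC x y) -/c !ip_selfE -/p -/q /z.
  by rewrite rmorphN rmorphM /= fmorphV /= qc; field.
have := ip_ge0 (x + z *: y).
rewrite expand -cabs2E /p /q -fmorphV -rmorphM -rmorphB -(rmorph0 (real_complex R)) lecR.
rewrite subr_ge0 ler_pdivrMr ?exprn_gt0 // -sqr_cabs -exprMn.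
by rewrite ler_pXn2r ?nnegrE ?cabs_ge0 ?mulr_ge0 ?hnorm_ge0.
Qed.

Lemma has_sum_ipl (I : eqType) (a : I -> H) l z :
  has_sum (hnorm ip) a l -> has_sum (@cabs R) (fun i => ip (a i) z) (ip l z).
Proof.
move=> al e e_gt0; have nz_gt0 : 0 < hnorm ip z + 1 by rewrite ltr_wpDl ?hnorm_ge0.
have [F0 F0l] := al _ (divr_gt0 e_gt0 nz_gt0); exists F0 => F uF sF.
rewrite -ip_suml -ipBl; apply: le_lt_trans (cauchy_schwarz _ _) _.
apply: le_lt_trans (ler_wpM2r (hnorm_ge0 z) (ltW (F0l F uF sF))) _.
by rewrite mulrAC ltr_pdivrMr // ltr_pM2l // ltrDl.
Qed.

End InnerProduct.

Section Reindexing.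
Variable R : realType.
Local Notation C := R[i].
Variable H : lmodType C.
Variable ip : H -> H -> C.
Variable I : countType.
Variable g : I -> I.
Hypothesis g_bij : bijective g.

Lemma has_sum_reindex (V : zmodType) (nrm : V -> R) (a b : I -> V) l :
  (forall i, b i = a (g i)) -> has_sum nrm a l -> has_sum nrm b l.
Proof.
case: g_bij => g' gK g'K ab al e /al[F0 F0l]; exists (map g' F0) => F uF sF.
under eq_bigr do rewrite ab.
rewrite -(big_map g xpredT).
apply: F0l; first by rewrite map_inj_uniq //; exact: can_inj gK.
by move=> k k0; rewrite -[k]g'K map_f // sF // map_f.
Qed.

Lemma clspan_reindex (a b : I -> H) x :
  (forall i, b i = a (g i)) -> clspan ip a x -> clspan ip b x.
Proof.
case: g_bij => g' gK g'K ab ax e /ax[s [c cs]]; exists (map g' s), (c \o g).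
by rewrite big_map (eq_bigr (fun i => c i *: a i)) // => i _; rewrite /= ab g'K.
Qed.

End Reindexing.

Lemma is_canon_dual_reindex (R : realType) (H : lmodType R[i]) (ip : H -> H -> R[i])
    (I : countType) (f : I -> H) (g : I -> I) (g_bij : bijective g) i h :
  is_canon_dual ip (fun j => f (g j)) i h <-> is_canon_dual ip f (g i) h.
Proof.
have [g' gK g'K] := g_bij; have g'_bij : bijective g' := Bijective g'K gK.
have fK j : f j = f (g (g' j)) by rewrite g'K.
split=> -[span sum]; split.
- exact: (clspan_reindex g'_bij (a := fun j => f (g j)) fK span).
- apply: (has_sum_reindex g'_bij (a := fun j => ip h (f (g j)) *: f (g j))) sum.
  by move=> j; rewrite -fK.
- exact: (clspan_reindex g_bij (a := f) (fun j => erefl) span).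
- exact: (has_sum_reindex g_bij (a := fun j => ip h (f j) *: f j) (fun j => erefl) sum).
Qed.

Lemma canon_dual_reindex (R : realType) (H : lmodType R[i]) (ip : H -> H -> R[i])
    (I : countType) (f : I -> H) (g : I -> I) i :
  bijective g -> canon_dual ip (fun j => f (g j)) i = canon_dual ip f (g i).
Proof.
move=> g_bij; congr epsilon; apply: functional_extensionality => h.
exact/propositional_extensionality/is_canon_dual_reindex.
Qed.

Section FrameBounds.
Variable R : realType.
Local Notation C := R[i].
Variable H : lmodType C.
Variable ip : H -> H -> C.
Variable I : countType.
Variable f : I -> H.
Hypothesis ip_inner : is_inner_product ip.
Hypothesis f_frame : frame_for_span ip f.

Lemma clspan_elem j : clspan ip f (f j).
Proof.
by move=> e e_gt0; exists [:: j], (fun=> 1); rewrite big_seq1 scale1r subrr hnorm0.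
Qed.

Lemma frame_elem_bounded : exists B, forall j, hnorm ip (f j) <= B.
Proof.
have [A [B [_ B_gt0 frame_ineq]]] := f_frame; exists (Num.sqrt B) => j.
have [s [fj_sum _ s_le]] := frame_ineq _ (clspan_elem j).
have := has_sum_ge_term j (fun k => cabs2_ge0 _) fj_sum.
rewrite ip_selfE // /cabs2 /= expr0n addr0 => fj_le.
have nfj_le : hnorm ip (f j) ^+ 2 <= B by have := hnorm_ge0 ip (f j); nra.
by rewrite -(ger0_norm (hnorm_ge0 ip (f j))) -sqrtr_sqr ler_wsqrtr.
Qed.

Lemma ip_canon_dual_le1 j h : is_canon_dual ip f j h -> cabs (ip (f j) h) <= 1.
Proof.
case=> h_span h_sum; have [A [B [_ _ frame_ineq]]] := f_frame.
have [s [s_sum _ _]] := frame_ineq _ h_span.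
have ip_fj : ip (f j) h = s%:C.
  apply: has_sum_unique (has_sum_ipl ip_inner h h_sum) _.
  have -> : (fun k => ip (ip h (f k) *: f k) h) = (fun k => (cabs2 (ip h (f k)))%:C).
    by apply: functional_extensionality => k; rewrite ipZl // cabs2E (ipC ip_inner h).
  exact: has_sum_realC.
have := has_sum_ge_term j (fun k => cabs2_ge0 _) s_sum.
rewrite (ipC ip_inner (f j) h) !ip_fj /cabs2 /= oppr0 expr0n addr0 cabsR => s2_le.
by rewrite ger0_norm; nra.
Qed.

(* Without a canonical dual, [canon_dual ip f i] is the epsilon of an empty
   predicate: one and the same junk vector for every [i]. *)
Lemma canon_dual_junk i :
  ~ (exists h, is_canon_dual ip f i h) ->
  canon_dual ip f i = epsilon (inhabits 0) (fun _ : H => False).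
Proof.
move=> no_dual; congr epsilon; apply: functional_extensionality => h.
by apply: propositional_extensionality; split=> // dual; apply: no_dual; exists h.
Qed.

Lemma ip_canon_dual_bounded : exists M, forall j, cabs (ip (f j) (canon_dual ip f j)) <= M.
Proof.
have [B f_le] := frame_elem_bounded.
set junk := epsilon (inhabits (0 : H)) (fun _ => False).
exists (Num.max 1 (B * hnorm ip junk)) => j; rewrite le_max.
have [[h dual]|no_dual] := classic (exists h, is_canon_dual ip f j h).
  by rewrite ip_canon_dual_le1 //; apply: epsilon_spec; exists h.
rewrite canon_dual_junk // -/junk; apply/orP; right.
apply: le_trans (cauchy_schwarz ip_inner _ _) _.
by rewrite ler_wpM2r ?hnorm_ge0.
Qed.

End FrameBounds.

Local Open Scope fset_scope.
(* Reopened so that [+] is not read as the union of finite maps. *)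
Local Open Scope ring_scope.

Lemma norm_sum_imfset_sub_le (V : numDomainType) (T : choiceType) (A : {fset T})
    (g : T -> T) (a : T -> V) (M : V) :
  injective g -> (forall j, `|a j| <= M) ->
  `|\sum_(i <- A) a (g i) - \sum_(i <- A) a i| <= M *+ 2 *+ (#|`A| - #|`A `&` g @` A|).
Proof.
move=> g_inj a_le; set B := g @` A.
have sum_le (X : {fset T}) : `|\sum_(i <- X) a i| <= M *+ #|`X|.
  apply: le_trans (ler_norm_sum _ _ _) _.
  apply: le_trans (ler_sum _ (fun i _ => a_le i)) _.
  by rewrite big_const_seq count_predT iter_addr_0.
have split_sum (X Y : {fset T}) :
    \sum_(i <- X) a i = \sum_(i <- X `&` Y) a i + \sum_(i <- X `\` Y) a i.
  rewrite (big_fsetID _ (mem Y)); congr (_ + _);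
    by apply: eq_fbigl => i; rewrite !inE //= andbC.
have cardB : #|`B| = #|`A| by apply/eqP/card_in_imfsetP => x y _ _ /g_inj.
have -> : \sum_(i <- A) a (g i) = \sum_(j <- B) a j.
  by rewrite big_imfset //; exact: in2W.
rewrite (split_sum B A) (split_sum A B) fsetIC.
rewrite opprD addrACA subrr add0r; apply: le_trans (ler_normB _ _) _.
rewrite -mulrnA mulnC mulrnA mulr2n; apply: lerD; apply: le_trans (sum_le _) _.
  by rewrite cardfsD cardB fsetIC.
by rewrite cardfsD.
Qed.

Lemma approx_of_card_bound (R : realType) (I : countType) (Is : nat -> {fset I})
    (x y : nat -> R[i]) (c : R) (k : nat -> nat) :
  (forall n, cabs (x n - y n) <= c *+ (#|`Is n| - k n)) ->
  (forall e : R, 0 < e -> exists N, forall n, (N <= n)%N ->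
     `|(k n)%:R / (#|`Is n|)%:R - 1| < e) ->
  approx Is x y.
Proof.
move=> xy_le k_to_1 e e_gt0; have c1_gt0 : 0 < `|c| + 1 by rewrite ltr_wpDl.
have [N k_close] := k_to_1 _ (divr_gt0 e_gt0 c1_gt0).
exists N => n /k_close; rewrite cabs_divn.
set m := #|`Is n|; set w := `|_ - 1| => w_lt.
have [->|m_gt0] := posnP m; first by rewrite invr0 mulr0. (* [_ / 0 = 0] *)
have m_gt0' : 0 < m%:R :> R by rewrite ltr0n.
have gap_le : (m - k n)%:R <= m%:R * w :> R.
  have [k_le|m_lt] := leqP (k n) m; last first.
    rewrite (_ : (m - k n = 0)%N) ?mulr_ge0 ?normr_ge0 //.
    by apply/eqP; rewrite subn_eq0 ltnW.
  have -> : (m - k n)%:R = m%:R * (1 - (k n)%:R / m%:R) :> R.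
    by rewrite natrB // mulrBr mulr1 mulrCA divff ?mulr1 // gt_eqF.
  by rewrite ler_wpM2l // /w distrC ler_norm.
have xy_le' : cabs (x n - y n) / m%:R <= `|c| * w.
  rewrite ler_pdivrMr // -mulrA; apply: le_trans (xy_le n) _.
  rewrite -/m -[c *+ _]mulr_natr; apply: le_trans (ler_wpM2r (ler0n _ _) (ler_norm c)) _.
  by rewrite ler_wpM2l // mulrC.
apply: le_lt_trans xy_le' _; apply: le_lt_trans (ler_wpM2l (normr_ge0 c) (ltW w_lt)) _.
by rewrite mulrA ltr_pdivrMr // mulrC ltr_pM2l // ltrDl.
Qed.

Theorem proposition3p14 (R : realType) (H : lmodType R[i]) (ip : H -> H -> R[i])
    (I : countType) (Is : nat -> {fset I}) (f : I -> H) (pi : I -> I) :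
  is_sep_hilbert ip ->
  (forall n, fsubset (Is n) (Is n.+1)) ->
  (forall i : I, exists n, i \in Is n) ->
  frame_for_span ip f ->
  bijective pi ->
  overlap_to_one R Is pi ->
  frame_approx ip Is (fun i => f (pi i)) f.
Proof.
move=> [ip_inner _ _] _ _ f_frame pi_bij overlap.
have [M a_le] := ip_canon_dual_bounded ip_inner f_frame.
set a := fun j => ip (f j) (canon_dual ip f j).
have a_le' j : `|a j| <= M%:C by rewrite normcE lecR; exact: a_le.
rewrite /frame_approx; apply: (approx_of_card_bound (c := M *+ 2)) overlap => n.
rewrite /Defs.bseq; under eq_bigr do rewrite canon_dual_reindex //.
have := norm_sum_imfset_sub_le (Is n) (bij_inj pi_bij) a_le'.
by rewrite -!rmorphMn normcE lecR.
Qed.
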